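(* Assume $p$ is unbounded. Then for every fixed $n\ge 0$, as $r\to\infty$, $$\mathbf{P}\big[M_{[0,n]}=r\big]\sim (1+\mu+\cdots+\mu^n)\,p_r\quad\text{and}\quad \mathbf{P}\big[M_{[0,n]}>r\big]\sim(1+\mu+\cdots+\mu^n)\,\bar F(r),$$ where the first asymptotic equivalence is understood along the infinite set $\{r:p_r>0\}$.
   Context: Let $p=(p_0,p_1,p_2,\dots)$ be a probability distribution on the nonnegative integers with mean $\mu=\sum_k kp_k\in(0,\infty)$, and let $\tau(p)$ be a Galton–Watson tree with offspring distribution $p$: it starts with a single root at generation $0$, and every vertex independently has $k$ children with probability $p_k$. The out-degree of a vertex is its number of children. $M_n$ denotes the maximal out-degree among the vertices of generation $n$ (with $M_n=0$ if generation $n$ is empty), and $M_{[0,n]}=\max_{0\le i\le n}M_i$ (the local maximal out-degree over the first $n+1$ generations). $\bar F(r)=\sum_{k>r}p_k$. The distribution $p$ is called unbounded if the set $\{r:p_r>0\}$ is unbounded. *)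

From Stdlib Require Import Reals List Lra.
Import ListNotations.
Open Scope R_scope.

Definition is_distribution (p : nat -> R) : Prop :=
  (forall k, 0 <= p k) /\ infinite_sum p 1.

Definition has_mean (p : nat -> R) (mu : R) : Prop :=
  infinite_sum (fun k => INR k * p k) mu.

Definition unbounded (p : nat -> R) : Prop :=
  forall N : nat, exists r : nat, (N <= r)%nat /\ 0 < p r.

(* Fbar(r) = sum_{k>r} p_k  (= 1 - sum_{k<=r} p_k for a distribution). *)
Definition Fbar (p : nat -> R) (r : nat) : R := 1 - sum_f_R0 p r.

Inductive ptree : Type := PNode : list ptree -> ptree.

Fixpoint tuples {A : Type} (k : nat) (l : list A) : list (list A) :=
  match k with
  | O => [[]]
  | S k' => flat_map (fun x => map (cons x) (tuples k' l)) l
  end.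

(* Outcomes of the Galton-Watson tree observed up to the out-degrees of the
   first m generations, i.e. the tree truncated at generation m (vertices of
   generation m carry no recorded children), restricted to those in which all
   observed out-degrees are <= r. *)
Fixpoint outcomes_le (m r : nat) : list ptree :=
  match m with
  | O => [PNode []]
  | S m' => flat_map (fun k => map PNode (tuples k (outcomes_le m' r)))
                     (seq 0 (S r))
  end.

Fixpoint weight (p : nat -> R) (m : nat) (t : ptree) : R :=
  match m with
  | O => 1
  | S m' => match t with
            | PNode ts => p (length ts) * fold_right Rmult 1 (map (weight p m') ts)
            end
  end.

(* P[ M_{[0,n]} <= r ]: sum of the probabilities of all outcomes (tree up to
   generation n+1) where every vertex of generations 0..n has out-degree <= r. *)
Definition P_Mle (p : nat -> R) (n r : nat) : R :=
  fold_right Rplus 0 (map (weight p (S n)) (outcomes_le (S n) r)).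

Definition P_Meq (p : nat -> R) (n r : nat) : R :=
  P_Mle p n r - match r with O => 0 | S r' => P_Mle p n r' end.

Definition P_Mgt (p : nat -> R) (n r : nat) : R := 1 - P_Mle p n r.

(* Let f_r(s) = sum_{k <= r} p_k s^k.  By the branching property the event
   M_{[0,n]} <= r has probability f_r^{n+1}(1), the (n+1)-fold iterate.  Near
   s = 1 the function f_r has slope close to mu, uniformly in large r, because
   the mean is finite.  Hence, writing 1 - f_r(s) = Fbar(r) + (f_r(1) - f_r(s)),
   an induction on the number of generations multiplies the tail asymptotics
   by mu and adds Fbar(r) at each step, producing 1 + mu + ... + mu^n.  For the
   point probabilities, f_{r+1}(s) - f_r(s') = p_{r+1} s^{r+1} + (f_r(s) - f_r(s'))
   and s^{r+1} -> 1 since r Fbar(r) -> 0. *)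

From Stdlib Require Import Reals List Lra Lia.
Open Scope R_scope.

Local Notation sumL l := (fold_right Rplus 0 l).
Local Notation prodL l := (fold_right Rmult 1 l).

Lemma sumL_app (l1 l2 : list R) : sumL (l1 ++ l2) = sumL l1 + sumL l2.
Proof. induction l1 as [|x l1 IH]; simpl; [ring | rewrite IH; ring]. Qed.

Lemma sumL_flat_map {A B : Type} (w : B -> R) (f : A -> list B) (l : list A) :
  sumL (map w (flat_map f l)) = sumL (map (fun x => sumL (map w (f x))) l).
Proof. induction l as [|x l IH]; simpl; [reflexivity|]. now rewrite map_app, sumL_app, IH. Qed.

Lemma sumL_scal {A : Type} (c : R) (f : A -> R) (l : list A) :
  sumL (map (fun x => c * f x) l) = c * sumL (map f l).
Proof. induction l as [|x l IH]; simpl; [ring | rewrite IH; ring]. Qed.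

Lemma sumL_seq (f : nat -> R) (r : nat) : sumL (map f (seq 0 (S r))) = sum_f_R0 f r.
Proof.
  induction r as [|r IH]; [simpl; ring|].
  rewrite seq_S, map_app, sumL_app, IH; simpl; ring.
Qed.

Lemma tuples_length {A : Type} (k : nat) (l ts : list A) :
  In ts (tuples k l) -> length ts = k.
Proof.
  revert ts; induction k as [|k IH]; simpl; intros ts Hts.
  - now destruct Hts as [<- | []].
  - apply in_flat_map in Hts as [x [_ Hts]].
    apply in_map_iff in Hts as [ts' [<- Hts']].
    simpl; now rewrite (IH _ Hts').
Qed.

Lemma sumL_tuples {A : Type} (w : A -> R) (k : nat) (l : list A) :
  sumL (map (fun ts => prodL (map w ts)) (tuples k l)) = sumL (map w l) ^ k.
Proof.
  induction k as [|k IH]; simpl; [ring|].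
  rewrite sumL_flat_map.
  transitivity (sumL (map (fun x => sumL (map w l) ^ k * w x) l)).
  - f_equal; apply map_ext; intro x.
    rewrite map_map; simpl; rewrite sumL_scal, IH; ring.
  - rewrite sumL_scal; ring.
Qed.

(* [prob_deg_le p m r] is the probability that every vertex of generations
   [0 .. m-1] has at most [r] children; the recursion is the branching property
   at the root. *)
Definition pgf_le (p : nat -> R) (r : nat) (s : R) : R :=
  sum_f_R0 (fun k => p k * s ^ k) r.

Fixpoint prob_deg_le (p : nat -> R) (m r : nat) : R :=
  match m with
  | O => 1
  | S m' => pgf_le p r (prob_deg_le p m' r)
  end.

Lemma sumL_weight_outcomes_le (p : nat -> R) (m r : nat) :
  sumL (map (weight p m) (outcomes_le m r)) = prob_deg_le p m r.
Proof.
  induction m as [|m IH]; [simpl; ring|].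
  cbn [outcomes_le prob_deg_le]; rewrite sumL_flat_map; unfold pgf_le; rewrite <- sumL_seq.
  f_equal; apply map_ext; intro k; rewrite map_map.
  transitivity (sumL (map (fun ts => p k * prodL (map (weight p m) ts))
                          (tuples k (outcomes_le m r)))).
  - f_equal; apply map_ext_in; intros ts Hts.
    simpl; now rewrite (tuples_length _ _ _ Hts).
  - now rewrite sumL_scal, sumL_tuples, IH.
Qed.

Lemma P_Mle_eq (p : nat -> R) (n r : nat) : P_Mle p n r = prob_deg_le p (S n) r.
Proof. exact (sumL_weight_outcomes_le p (S n) r). Qed.

Definition asymp_equiv (f g : nat -> R) : Prop :=
  forall eps, 0 < eps -> exists N, forall r, (N <= r)%nat ->
    Rabs (f r - g r) <= eps * g r.

Lemma asymp_equiv_ext (f f' g g' : nat -> R) :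
  (forall r, f r = f' r) -> (forall r, g r = g' r) ->
  asymp_equiv f g -> asymp_equiv f' g'.
Proof.
  intros Hf Hg Hfg eps Heps; destruct (Hfg eps Heps) as [N HN].
  exists N; intros r Hr; rewrite <- Hf, <- Hg; auto.
Qed.

Lemma asymp_equiv_refl (g : nat -> R) : (forall r, 0 <= g r) -> asymp_equiv g g.
Proof.
  intros Hg eps Heps; exists O; intros r _.
  rewrite Rminus_diag, Rabs_R0; specialize (Hg r); nra.
Qed.

Lemma asymp_equiv_plus (f1 f2 g1 g2 : nat -> R) :
  asymp_equiv f1 g1 -> asymp_equiv f2 g2 ->
  asymp_equiv (fun r => f1 r + f2 r) (fun r => g1 r + g2 r).
Proof.
  intros H1 H2 eps Heps.
  destruct (H1 eps Heps) as [N1 HN1]; destruct (H2 eps Heps) as [N2 HN2].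
  exists (Nat.max N1 N2); intros r Hr.
  specialize (HN1 r ltac:(lia)); specialize (HN2 r ltac:(lia)).
  replace (f1 r + f2 r - (g1 r + g2 r)) with ((f1 r - g1 r) + (f2 r - g2 r)) by ring.
  eapply Rle_trans; [apply Rabs_triang | lra].
Qed.

Lemma asymp_equiv_mul_l (w f g : nat -> R) : (forall r, 0 <= w r) ->
  asymp_equiv f g -> asymp_equiv (fun r => w r * f r) (fun r => w r * g r).
Proof.
  intros Hw Hfg eps Heps; destruct (Hfg eps Heps) as [N HN].
  exists N; intros r Hr; specialize (HN r Hr).
  rewrite <- Rmult_minus_distr_l, Rabs_mult, (Rabs_pos_eq _ (Hw r)).
  apply Rmult_le_compat_l with (r := w r) in HN; [lra | apply Hw].
Qed.

Lemma asymp_equiv_trans (f g h : nat -> R) :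
  asymp_equiv f g -> asymp_equiv g h -> asymp_equiv f h.
Proof.
  intros Hfg Hgh eps Heps.
  set (e := Rmin 1 (eps / 3)).
  assert (He : 0 < e) by (apply Rmin_glb_lt; lra).
  assert (He1 : e <= 1) by apply Rmin_l.
  assert (He3 : e <= eps / 3) by apply Rmin_r.
  destruct (Hfg e He) as [N1 HN1]; destruct (Hgh e He) as [N2 HN2].
  exists (Nat.max N1 N2); intros r Hr.
  specialize (HN1 r ltac:(lia)); specialize (HN2 r ltac:(lia)).
  assert (Hh : 0 <= h r) by (pose proof (Rabs_pos (g r - h r)); nra).
  assert (Hg : g r <= 2 * h r) by (pose proof (Rle_abs (g r - h r)); nra).
  replace (f r - h r) with ((f r - g r) + (g r - h r)) by ring.
  eapply Rle_trans; [apply Rabs_triang | nra].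
Qed.

Lemma asymp_equiv_unshift (f g : nat -> R) :
  asymp_equiv (fun r => f (S r)) (fun r => g (S r)) -> asymp_equiv f g.
Proof.
  intros Hfg eps Heps; destruct (Hfg eps Heps) as [N HN].
  exists (S N); intros [|r] Hr; [lia | apply HN; lia].
Qed.

Lemma asymp_equiv_cv0 (f g : nat -> R) :
  asymp_equiv f g -> Un_cv g 0 -> Un_cv f 0.
Proof.
  intros Hfg Hg eps Heps.
  destruct (Hfg 1 Rlt_0_1) as [N1 HN1]; destruct (Hg (eps / 2) ltac:(lra)) as [N2 HN2].
  exists (Nat.max N1 N2); intros r Hr.
  specialize (HN1 r ltac:(lia)); specialize (HN2 r ltac:(lia)).
  unfold Rdist in *; rewrite Rminus_0_r in *.
  replace (f r) with ((f r - g r) + g r) by ring.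
  pose proof (Rle_abs (g r)); pose proof (Rabs_triang (f r - g r) (g r)); lra.
Qed.

Lemma asymp_equiv_cv1 (w a : nat -> R) : (forall r, 0 <= w r) ->
  Un_cv a 1 -> asymp_equiv (fun r => w r * a r) w.
Proof.
  intros Hw Ha eps Heps; destruct (Ha eps Heps) as [N HN].
  exists N; intros r Hr; specialize (HN r Hr); unfold Rdist in HN.
  replace (w r * a r - w r) with (w r * (a r - 1)) by ring.
  rewrite Rabs_mult, (Rabs_pos_eq _ (Hw r)).
  specialize (Hw r); nra.
Qed.

Lemma asymp_equiv_ratio (f g : nat -> R) : asymp_equiv f g ->
  forall eps, 0 < eps -> exists N, forall r, (N <= r)%nat -> 0 < g r ->
    Rabs (f r / g r - 1) < eps.
Proof.
  intros Hfg eps Heps; destruct (Hfg (eps / 2) ltac:(lra)) as [N HN].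
  exists N; intros r Hr Hg; specialize (HN r Hr).
  replace (f r / g r - 1) with ((f r - g r) / g r) by (field; lra).
  unfold Rdiv; rewrite Rabs_mult, Rabs_inv, (Rabs_pos_eq (g r)) by lra.
  apply Rmult_le_compat_r with (r := / g r) in HN; [|left; apply Rinv_0_lt_compat, Hg].
  replace (eps / 2 * g r * / g r) with (eps / 2) in HN by (field; lra); lra.
Qed.

Lemma sum_f_R0_le_mono (f : nat -> R) (m n : nat) :
  (forall k, 0 <= f k) -> (m <= n)%nat -> sum_f_R0 f m <= sum_f_R0 f n.
Proof. intros Hf; apply tech9; intro k; rewrite tech5; pose proof (Hf (S k)); lra. Qed.

Lemma Un_cv_const (c : R) : Un_cv (fun _ => c) c.
Proof. intros eps Heps; exists O; intros; unfold Rdist; rewrite Rminus_diag, Rabs_R0; lra. Qed.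

Lemma Un_cv_scal0 (c : R) (u : nat -> R) : Un_cv u 0 -> Un_cv (fun r => c * u r) 0.
Proof. intros Hu; rewrite <- (Rmult_0_r c); apply CV_mult; [apply Un_cv_const | exact Hu]. Qed.

Lemma Un_cv_succ (u : nat -> R) (l : R) : Un_cv u l -> Un_cv (fun r => u (S r)) l.
Proof.
  intros Hu; apply (Un_cv_ext (fun r => u (r + 1)%nat)); [intro r; f_equal; lia|].
  exact (CV_shift' u 1 l Hu).
Qed.

Lemma bernoulli_ineq (s : R) (k : nat) : 0 <= s -> 1 - INR k * (1 - s) <= s ^ k.
Proof.
  intros Hs; induction k as [|k IH]; [simpl; lra|].
  rewrite S_INR; simpl.
  assert (s * (1 - INR k * (1 - s)) <= s * s ^ k) by (apply Rmult_le_compat_l; lra).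
  assert (0 <= INR k * ((1 - s) * (1 - s)))
    by (apply Rmult_le_pos; [apply pos_INR | apply Rle_0_sqr]).
  nra.
Qed.

Lemma pow_sub_le (s s' : R) (k : nat) : 0 <= s' <= s -> s <= 1 ->
  s ^ k - s' ^ k <= INR k * (s - s').
Proof.
  intros Hs Hs1; induction k as [|k IH]; [simpl; lra|].
  rewrite S_INR; simpl.
  assert (s' ^ k <= s ^ k) by (apply pow_incr; lra).
  assert (s' ^ k <= 1) by (rewrite <- (pow1 k); apply pow_incr; lra).
  pose proof (pow_le s' k ltac:(lra)); nra.
Qed.

Lemma pow_sub_ge (s s' : R) (k : nat) : 0 <= s' <= s -> s' <= 1 ->
  INR k * (s - s') * s' ^ k <= s ^ k - s' ^ k.
Proof.
  intros Hs Hs1; induction k as [|k IH]; [simpl; lra|].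
  rewrite S_INR; simpl.
  assert (s' ^ k <= s ^ k) by (apply pow_incr; lra).
  pose proof (pow_le s' k ltac:(lra)); pose proof (pos_INR k).
  assert (s' * (INR k * (s - s') * s' ^ k) <= s * (s ^ k - s' ^ k))
    by (apply Rmult_le_compat; try lra; apply Rmult_le_pos; [apply Rmult_le_pos|]; lra).
  assert ((s - s') * (s' * s' ^ k) <= (s - s') * s' ^ k)
    by (apply Rmult_le_compat_l; nra).
  nra.
Qed.

Lemma pow_index_cv1 (s : nat -> R) : (forall r, 0 <= s r <= 1) ->
  Un_cv (fun r => INR r * (1 - s r)) 0 -> Un_cv (fun r => s r ^ r) 1.
Proof.
  intros Hs Hcv eps Heps; destruct (Hcv eps Heps) as [N HN].
  exists N; intros r Hr; specialize (HN r Hr); unfold Rdist in *.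
  rewrite Rminus_0_r in HN.
  pose proof (bernoulli_ineq (s r) r ltac:(apply Hs)).
  assert (s r ^ r <= 1) by (rewrite <- (pow1 r); apply pow_incr, Hs).
  pose proof (Rle_abs (INR r * (1 - s r))).
  rewrite Rabs_left1 by lra; lra.
Qed.

Definition geom_sum (mu : R) (m : nat) : R := sum_f_R0 (fun i => mu ^ i) m.

Lemma geom_sum_S (mu : R) (m : nat) : geom_sum mu (S m) = 1 + mu * geom_sum mu m.
Proof.
  unfold geom_sum; induction m as [|m IH]; [simpl; ring|].
  rewrite !tech5 in *.
  replace (mu ^ S (S m)) with (mu * mu ^ S m) by reflexivity.
  rewrite IH at 1; ring.
Qed.

Lemma geom_sum_ge1 (mu : R) (m : nat) : 0 <= mu -> 1 <= geom_sum mu m.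
Proof.
  intros Hmu; induction m as [|m IH]; [unfold geom_sum; simpl; lra|].
  rewrite geom_sum_S; nra.
Qed.

Definition partial_mean (p : nat -> R) (r : nat) : R := sum_f_R0 (fun k => INR k * p k) r.

Section Offspring.

Variables (p : nat -> R) (mu : R).
Hypothesis p_dist : is_distribution p.
Hypothesis p_mean : has_mean p mu.

Let p_ge0 k : 0 <= p k := proj1 p_dist k.

Lemma Fbar_ge0 (r : nat) : 0 <= Fbar p r.
Proof. unfold Fbar; pose proof (sum_incr p r 1 (proj2 p_dist) p_ge0); lra. Qed.

Lemma Fbar_gt0 (r : nat) : unbounded p -> 0 < Fbar p r.
Proof.
  intros Hunb; destruct (Hunb (S r)) as [[|r'] [Hr' Hpr']]; [lia|].
  pose proof (sum_incr p (S r') 1 (proj2 p_dist) p_ge0).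
  assert (sum_f_R0 p r <= sum_f_R0 p r').
  { apply sum_f_R0_le_mono; [exact p_ge0 | lia]. }
  rewrite tech5 in *; unfold Fbar; lra.
Qed.

Lemma Fbar_cv0 : Un_cv (Fbar p) 0.
Proof.
  intros eps Heps; destruct (proj2 p_dist eps Heps) as [N HN].
  exists N; intros r Hr; specialize (HN r Hr); unfold Rdist, Fbar in *.
  rewrite Rminus_0_r, <- Rabs_Ropp.
  now replace (- (1 - sum_f_R0 p r)) with (sum_f_R0 p r - 1) by ring.
Qed.

Lemma partial_mean_le (r : nat) : partial_mean p r <= mu.
Proof.
  apply sum_incr; [exact p_mean | intro k; apply Rmult_le_pos; [apply pos_INR | apply p_ge0]].
Qed.

Lemma partial_mean_increment_ge (r j : nat) :
  INR r * (sum_f_R0 p (j + r) - sum_f_R0 p r) <= partial_mean p (j + r) - partial_mean p r.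
Proof.
  unfold partial_mean; induction j as [|j IH]; [simpl; lra|].
  rewrite Nat.add_succ_l, !tech5.
  assert (INR r * p (S (j + r)) <= INR (S (j + r)) * p (S (j + r)))
    by (apply Rmult_le_compat_r; [apply p_ge0 | apply le_INR; lia]).
  lra.
Qed.

(* Markov's inequality for the tail: [r * P[X > r] <= E[X; X > r]]. *)
Lemma mul_Fbar_le (r : nat) : INR r * Fbar p r <= mu - partial_mean p r.
Proof.
  unfold Fbar.
  apply (Rle_cv_lim (partial_mean_increment_ge r)).
  - apply CV_mult; [apply Un_cv_const|].
    apply CV_minus; [apply (CV_shift' _ r), (proj2 p_dist) | apply Un_cv_const].
  - apply CV_minus; [apply (CV_shift' (partial_mean p) r), p_mean | apply Un_cv_const].
Qed.

Lemma mul_Fbar_cv0 : Un_cv (fun r => INR r * Fbar p r) 0.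
Proof.
  intros eps Heps; destruct (p_mean eps Heps) as [N HN].
  exists N; intros r Hr; specialize (HN r Hr); unfold Rdist in *.
  rewrite Rminus_0_r, Rabs_pos_eq
    by (apply Rmult_le_pos; [apply pos_INR | apply Fbar_ge0]).
  pose proof (mul_Fbar_le r); pose proof (partial_mean_le r).
  rewrite Rabs_left1 in HN by (unfold partial_mean in *; lra).
  unfold partial_mean in *; lra.
Qed.

Lemma pgf_le_one (r : nat) : pgf_le p r 1 = sum_f_R0 p r.
Proof. unfold pgf_le; apply sum_eq; intros; rewrite pow1; ring. Qed.

Lemma pgf_le_succ (r : nat) (s : R) : pgf_le p (S r) s = pgf_le p r s + p (S r) * s ^ S r.
Proof. apply tech5. Qed.

Lemma pgf_le_range (r : nat) (s : R) : 0 <= s <= 1 -> 0 <= pgf_le p r s <= 1.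
Proof.
  intros Hs; unfold pgf_le; split.
  - apply cond_pos_sum; intro k; apply Rmult_le_pos; [apply p_ge0 | apply pow_le; lra].
  - apply Rle_trans with (sum_f_R0 p r); [|exact (sum_incr p r 1 (proj2 p_dist) p_ge0)].
    apply sum_Rle; intros k _.
    assert (s ^ k <= 1) by (rewrite <- (pow1 k); apply pow_incr; lra).
    pose proof (p_ge0 k); nra.
Qed.

Lemma pgf_le_mono (r : nat) (s s' : R) : 0 <= s' <= s -> pgf_le p r s' <= pgf_le p r s.
Proof.
  intros Hs; apply sum_Rle; intros k _.
  apply Rmult_le_compat_l; [apply p_ge0 | apply pow_incr; lra].
Qed.

Lemma pgf_le_sub_le (r : nat) (s s' : R) : 0 <= s' <= s -> s <= 1 ->
  pgf_le p r s - pgf_le p r s' <= mu * (s - s').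
Proof.
  intros Hs Hs1; unfold pgf_le; rewrite <- minus_sum.
  apply Rle_trans with (sum_f_R0 (fun k => (INR k * p k) * (s - s')) r).
  - apply sum_Rle; intros k _.
    pose proof (pow_sub_le s s' k Hs Hs1); pose proof (p_ge0 k).
    replace (p k * s ^ k - p k * s' ^ k) with (p k * (s ^ k - s' ^ k)) by ring.
    replace (INR k * p k * (s - s')) with (p k * (INR k * (s - s'))) by ring.
    apply Rmult_le_compat_l; lra.
  - rewrite <- scal_sum; pose proof (partial_mean_le r); unfold partial_mean in *; nra.
Qed.

Lemma pgf_le_sub_ge (K r : nat) (s s' : R) : (K <= r)%nat -> 0 <= s' <= s -> s <= 1 ->
  (s - s') * (partial_mean p K - INR K * mu * (1 - s')) <= pgf_le p r s - pgf_le p r s'.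
Proof.
  intros HK Hs Hs1; unfold pgf_le; rewrite <- minus_sum.
  set (d k := p k * s ^ k - p k * s' ^ k).
  assert (Hd : forall k, 0 <= d k).
  { intro k; unfold d; pose proof (p_ge0 k).
    assert (s' ^ k <= s ^ k) by (apply pow_incr; lra); nra. }
  apply Rle_trans with (sum_f_R0 d K).
  2:{ exact (sum_f_R0_le_mono d K r Hd HK). }
  apply Rle_trans with (sum_f_R0 (fun k => (INR k * p k) * ((s - s') * (1 - INR K * (1 - s')))) K).
  - rewrite <- scal_sum.
    pose proof (partial_mean_le K); pose proof (pos_INR K).
    assert (0 <= INR K * (1 - s')) by (apply Rmult_le_pos; lra).
    assert (INR K * (1 - s') * partial_mean p K <= INR K * (1 - s') * mu)
      by (apply Rmult_le_compat_l; lra).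
    unfold partial_mean in *; nra.
  - apply sum_Rle; intros k Hk; unfold d.
    pose proof (pow_sub_ge s s' k Hs ltac:(lra)).
    pose proof (bernoulli_ineq s' k ltac:(lra)).
    assert (INR k <= INR K) by (apply le_INR; lia).
    pose proof (pos_INR k); pose proof (p_ge0 k).
    assert (1 - INR K * (1 - s') <= s' ^ k) by nra.
    assert (INR k * (s - s') * (1 - INR K * (1 - s')) <= INR k * (s - s') * s' ^ k)
      by (apply Rmult_le_compat_l; [apply Rmult_le_pos|]; lra).
    assert (p k * (INR k * (s - s') * (1 - INR K * (1 - s'))) <= p k * (s ^ k - s' ^ k))
      by (apply Rmult_le_compat_l; lra).
    nra.
Qed.

Hypothesis mu_pos : 0 < mu.

Lemma pgf_le_sub_asymp (s s' : nat -> R) :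
  (forall r, 0 <= s' r <= s r) -> (forall r, s r <= 1) -> Un_cv (fun r => 1 - s' r) 0 ->
  asymp_equiv (fun r => pgf_le p r (s r) - pgf_le p r (s' r)) (fun r => mu * (s r - s' r)).
Proof.
  intros Hs Hs1 Hcv eps Heps.
  set (e := eps * mu / 2).
  assert (He : 0 < e) by (unfold e; nra).
  destruct (p_mean e He) as [K HK].
  assert (HmuK : mu - e < partial_mean p K).
  { specialize (HK K (le_n K)); unfold Rdist, partial_mean in *.
    apply Rabs_def2 in HK; lra. }
  assert (HKmu : 0 <= INR K * mu) by (pose proof (pos_INR K); nra).
  destruct (Hcv (e / (INR K * mu + 1))) as [N HN].
  { apply Rdiv_lt_0_compat; lra. }
  exists (Nat.max K N); intros r Hr; specialize (HN r ltac:(lia)).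
  unfold Rdist in HN; rewrite Rminus_0_r in HN.
  specialize (Hs r); specialize (Hs1 r).
  assert (Hsmall : INR K * mu * (1 - s' r) <= e).
  { apply Rabs_def2 in HN as [HN _].
    apply Rmult_lt_compat_r with (r := INR K * mu + 1) in HN; [|lra].
    replace (e / (INR K * mu + 1) * (INR K * mu + 1)) with e in HN by (field; lra).
    nra. }
  pose proof (pgf_le_sub_ge K r (s r) (s' r) ltac:(lia) Hs Hs1).
  pose proof (pgf_le_sub_le r (s r) (s' r) Hs Hs1).
  apply Rabs_le; unfold e in *; nra.
Qed.

Lemma prob_deg_le_range (m r : nat) : 0 <= prob_deg_le p m r <= 1.
Proof. induction m as [|m IH]; simpl; [lra | now apply pgf_le_range]. Qed.

Lemma prob_deg_le_succ (m r : nat) : prob_deg_le p m r <= prob_deg_le p m (S r).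
Proof.
  induction m as [|m IH]; simpl; [lra|].
  pose proof (prob_deg_le_range m r); pose proof (prob_deg_le_range m (S r)).
  rewrite pgf_le_succ.
  pose proof (pgf_le_mono r _ _ (conj (proj1 H) IH)).
  assert (0 <= p (S r) * prob_deg_le p m (S r) ^ S r)
    by (apply Rmult_le_pos; [apply p_ge0 | apply pow_le; lra]).
  lra.
Qed.

Lemma prob_deg_le_tail_asymp (m : nat) :
  asymp_equiv (fun r => 1 - prob_deg_le p (S m) r) (fun r => geom_sum mu m * Fbar p r).
Proof.
  induction m as [|m IH].
  - apply (asymp_equiv_ext (Fbar p) _ (Fbar p)); [| intro r; unfold geom_sum; simpl; ring |].
    + intro r; cbn [prob_deg_le]; now rewrite pgf_le_one.
    + apply asymp_equiv_refl, Fbar_ge0.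
  - set (sigma := prob_deg_le p (S m)).
    assert (Hcv : Un_cv (fun r => 1 - sigma r) 0)
      by exact (asymp_equiv_cv0 _ _ IH (Un_cv_scal0 _ _ Fbar_cv0)).
    assert (Hinc := pgf_le_sub_asymp (fun _ => 1) sigma
                      (prob_deg_le_range (S m)) (fun _ => Rle_refl 1) Hcv).
    pose proof (asymp_equiv_trans _ _ _ Hinc
                  (asymp_equiv_mul_l (fun _ => mu) _ _ (fun _ => Rlt_le _ _ mu_pos) IH)) as Hgen.
    eapply asymp_equiv_ext;
      [| | exact (asymp_equiv_plus _ _ _ _ (asymp_equiv_refl _ Fbar_ge0) Hgen)].
    + intro r; change (prob_deg_le p (S (S m)) r) with (pgf_le p r (sigma r)).
      cbv beta; rewrite pgf_le_one; unfold Fbar; ring.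
    + intro r; rewrite geom_sum_S; ring.
Qed.

Lemma prob_deg_le_tail_cv0 (m : nat) : Un_cv (fun r => 1 - prob_deg_le p (S m) r) 0.
Proof. exact (asymp_equiv_cv0 _ _ (prob_deg_le_tail_asymp m) (Un_cv_scal0 _ _ Fbar_cv0)). Qed.

Lemma mul_prob_deg_le_tail_cv0 (m : nat) :
  Un_cv (fun r => INR r * (1 - prob_deg_le p (S m) r)) 0.
Proof.
  apply (asymp_equiv_cv0 _ _ (asymp_equiv_mul_l INR _ _ pos_INR (prob_deg_le_tail_asymp m))).
  apply (Un_cv_ext (fun r => geom_sum mu m * (INR r * Fbar p r))); [intro r; ring|].
  exact (Un_cv_scal0 _ _ mul_Fbar_cv0).
Qed.

Lemma prob_deg_le_jump_asymp (m : nat) :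
  asymp_equiv (fun r => prob_deg_le p (S m) (S r) - prob_deg_le p (S m) r)
              (fun r => geom_sum mu m * p (S r)).
Proof.
  induction m as [|m IH].
  - apply (asymp_equiv_ext (fun r => p (S r)) _ (fun r => p (S r))).
    + intro r; cbn [prob_deg_le]; rewrite pgf_le_succ, pow1; ring.
    + intro r; unfold geom_sum; simpl; ring.
    + apply asymp_equiv_refl; intro r; apply p_ge0.
  - set (sigma := prob_deg_le p (S m)).
    assert (Hrange := prob_deg_le_range (S m)).
    assert (Hpow : Un_cv (fun r => sigma (S r) ^ S r) 1)
      by exact (Un_cv_succ _ _ (pow_index_cv1 sigma Hrange (mul_prob_deg_le_tail_cv0 m))).
    assert (Hinc := pgf_le_sub_asymp (fun r => sigma (S r)) sigma
                      (fun r => conj (proj1 (Hrange r)) (prob_deg_le_succ (S m) r))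
                      (fun r => proj2 (Hrange (S r))) (prob_deg_le_tail_cv0 m)).
    pose proof (asymp_equiv_trans _ _ _ Hinc
                  (asymp_equiv_mul_l (fun _ => mu) _ _ (fun _ => Rlt_le _ _ mu_pos) IH)) as Hgen.
    pose proof (asymp_equiv_cv1 (fun r => p (S r)) _ (fun r => p_ge0 (S r)) Hpow) as Hnew.
    eapply asymp_equiv_ext; [| | exact (asymp_equiv_plus _ _ _ _ Hnew Hgen)].
    + intro r; change (prob_deg_le p (S (S m)) ?k) with (pgf_le p k (sigma k)).
      cbv beta; rewrite pgf_le_succ; ring.
    + intro r; rewrite geom_sum_S; ring.
Qed.

Lemma P_Meq_asymp (n : nat) : asymp_equiv (P_Meq p n) (fun r => geom_sum mu n * p r).
Proof.
  apply asymp_equiv_unshift; eapply asymp_equiv_ext;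
    [| intro r; reflexivity | exact (prob_deg_le_jump_asymp n)].
  intro r; unfold P_Meq; now rewrite !P_Mle_eq.
Qed.

Lemma P_Mgt_asymp (n : nat) : asymp_equiv (P_Mgt p n) (fun r => geom_sum mu n * Fbar p r).
Proof.
  eapply asymp_equiv_ext; [| intro r; reflexivity | exact (prob_deg_le_tail_asymp n)].
  intro r; unfold P_Mgt; now rewrite P_Mle_eq.
Qed.

End Offspring.

Theorem theorem2p3 (p : nat -> R) (mu : R) (n : nat)
  (Hp : is_distribution p) (Hmu : has_mean p mu) (Hmu0 : 0 < mu)
  (Hunb : unbounded p) :
  let c := sum_f_R0 (fun i => mu ^ i) n in
  (forall eps : R, 0 < eps -> exists N : nat, forall r : nat, (N <= r)%nat ->
     0 < p r -> Rabs (P_Meq p n r / (c * p r) - 1) < eps) /\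
  (forall eps : R, 0 < eps -> exists N : nat, forall r : nat, (N <= r)%nat ->
     Rabs (P_Mgt p n r / (c * Fbar p r) - 1) < eps).
Proof.
  intros c.
  assert (Hc : 1 <= geom_sum mu n) by exact (geom_sum_ge1 mu n (Rlt_le _ _ Hmu0)).
  split; intros eps Heps.
  - destruct (asymp_equiv_ratio _ _ (P_Meq_asymp p mu Hp Hmu Hmu0 n) eps Heps) as [N HN].
    exists N; intros r Hr Hpr; apply HN; [exact Hr | nra].
  - destruct (asymp_equiv_ratio _ _ (P_Mgt_asymp p mu Hp Hmu Hmu0 n) eps Heps) as [N HN].
    exists N; intros r Hr; apply HN; [exact Hr|].
    pose proof (Fbar_gt0 p Hp r Hunb); nra.
Qed.
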